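(* Let $\mathcal{U}\subset\mathbb{R}^m$ be a nonempty closed convex set, let $\xi_1:\mathbb{R}^m\to\mathbb{R}$ be convex and differentiable with $\nabla\xi_1$ Lipschitz continuous with constant $L>0$, and let $\xi_2$ be a proper closed convex function that is strongly convex with constant $\mu>0$. Let $\xi=\xi_1+\xi_2$ and consider $\min_{{\bf u}\in\mathcal{U}}\xi({\bf u})$. Let ${\bf u}^0\in\mathcal{U}\cap\mathrm{dom}(\xi_2)$, ${\bf u}^{-1}={\bf u}^0$, $L_0\in(0,L]$, and for $k\ge1$ generate ${\bf u}^k$ as follows: choose $L_k\in(0,L]$ and $\omega_{k-1}$ with $0\le\omega_{k-1}\le\sqrt{L_{k-1}/L_k}$, set $\hat{\bf u}^{k-1}={\bf u}^{k-1}+\omega_{k-1}({\bf u}^{k-1}-{\bf u}^{k-2})$, and $${\bf u}^k=\arg\min_{{\bf u}\in\mathcal{U}}\ \xi_1(\hat{\bf u}^{k-1})+\langle\nabla\xi_1(\hat{\bf u}^{k-1}),{\bf u}-\hat{\bf u}^{k-1}\rangle+\tfrac{L_k}{2}\|{\bf u}-\hat{\bf u}^{k-1}\|^2+\xi_2({\bf u});$$ if $\xi({\bf u}^k)>\xi({\bf u}^{k-1})$, recompute ${\bf u}^k$ by the same formula with $\hat{\bf u}^{k-1}$ replaced by ${\bf u}^{k-1}$ (i.e. $\omega_{k-1}=0$). Assume that for every $k\ge1$ the final ${\bf u}^k$ and the extrapolated point $\hat{\bf u}^{k-1}$ actually used satisfy $$\xi_1({\bf u}^k)\le\xi_1(\hat{\bf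 u}^{k-1})+\langle\nabla\xi_1(\hat{\bf u}^{k-1}),{\bf u}^k-\hat{\bf u}^{k-1}\rangle+\tfrac{L_k}{2}\|{\bf u}^k-\hat{\bf u}^{k-1}\|^2 .$$ Then $\{{\bf u}^k\}$ converges R-linearly to the unique minimizer ${\bf u}^*$ of $\xi$ over $\mathcal{U}$: there exist constants $C>0$ and $0<\tau<1$ such that $\|{\bf u}^k-{\bf u}^*\|\le C\tau^k$ for all $k\ge0$.
   Context: Strong convexity of $\xi_2$ with constant $\mu>0$ means $\xi_2({\bf u})-\xi_2({\bf v})\ge\langle{\bf g}_{\bf v},{\bf u}-{\bf v}\rangle+\frac{\mu}{2}\|{\bf u}-{\bf v}\|^2$ for all ${\bf g}_{\bf v}\in\partial\xi_2({\bf v})$ and ${\bf u},{\bf v}\in\mathrm{dom}(\xi_2)$. *)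

From Stdlib Require Import Reals.
From mathcomp Require Import ssreflect ssrfun ssrbool eqtype ssrnat seq fintype bigop.
Set Implicit Arguments.
Unset Strict Implicit.
Unset Printing Implicit Defensive.
Open Scope R_scope.

Definition vec (m : nat) := 'I_m -> R.

Definition vadd m (x y : vec m) : vec m := fun i => x i + y i.
Definition vsub m (x y : vec m) : vec m := fun i => x i - y i.
Definition vscale m (a : R) (x : vec m) : vec m := fun i => a * x i.
Definition inner m (x y : vec m) : R := \big[Rplus/0]_(i < m) (x i * y i).
Definition vnorm m (x : vec m) : R := sqrt (inner x x).

Definition vconv m (xs : nat -> vec m) (a : vec m) : Prop :=
  forall eps, 0 < eps -> exists N, forall n, (N <= n)%coq_nat -> vnorm (vsub (xs n) a) < eps.

Definition vnonempty m (U : vec m -> Prop) := exists x, U x.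
Definition vclosed_set m (U : vec m -> Prop) :=
  forall xs a, (forall n, U (xs n)) -> vconv xs a -> U a.
Definition vconvex_set m (U : vec m -> Prop) :=
  forall x y t, U x -> U y -> 0 <= t <= 1 ->
    U (vadd (vscale t x) (vscale (1 - t) y)).

Definition convex_fun m (f : vec m -> R) :=
  forall x y t, 0 <= t <= 1 ->
    f (vadd (vscale t x) (vscale (1 - t) y)) <= t * f x + (1 - t) * f y.
Definition is_gradient m (f : vec m -> R) (g : vec m -> vec m) :=
  forall x eps, 0 < eps -> exists delta, 0 < delta /\
    forall h, vnorm h < delta ->
      Rabs (f (vadd x h) - f x - inner (g x) h) <= eps * vnorm h.
Definition lipschitz m (g : vec m -> vec m) (L : R) :=
  forall x y, vnorm (vsub (g x) (g y)) <= L * vnorm (vsub x y).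

(* extended reals R u {+oo}: None = +oo *)
Definition ER := option R.
Definition ERle (a b : ER) : Prop :=
  match a, b with
  | _, None => True
  | None, Some _ => False
  | Some x, Some y => x <= y
  end.
Definition ERlt (a b : ER) : Prop := ~ ERle b a.
Definition ERaddR (r : R) (a : ER) : ER :=
  match a with Some x => Some (r + x) | None => None end.

Definition dom m (f : vec m -> ER) (x : vec m) : Prop := f x <> None.

Definition proper_fun m (f : vec m -> ER) := exists x, dom f x.
(* closed = epigraph closed *)
Definition closed_fun m (f : vec m -> ER) :=
  forall (xs : nat -> vec m) (rs : nat -> R) x r,
    (forall n, ERle (f (xs n)) (Some (rs n))) -> vconv xs x -> Un_cv rs r ->
    ERle (f x) (Some r).
Definition convex_efun m (f : vec m -> ER) :=
  forall x y t, dom f x -> dom f y -> 0 <= t <= 1 ->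
    exists fx fy, f x = Some fx /\ f y = Some fy /\
      ERle (f (vadd (vscale t x) (vscale (1 - t) y))) (Some (t * fx + (1 - t) * fy)).

Definition subgrad m (f : vec m -> ER) (v g : vec m) :=
  exists fv, f v = Some fv /\
    forall u, ERle (Some (fv + inner g (vsub u v))) (f u).

Definition strongly_convex m (f : vec m -> ER) (mu : R) :=
  forall u v g fu fv, f u = Some fu -> f v = Some fv -> subgrad f v g ->
    fu - fv >= inner g (vsub u v) + mu / 2 * (vnorm (vsub u v)) ^ 2.

Definition is_min_over m (U : vec m -> Prop) (f : vec m -> ER) (x : vec m) :=
  U x /\ forall z, U z -> ERle (f x) (f z).

Definition xi_sum m (xi1 : vec m -> R) (xi2 : vec m -> ER) : vec m -> ER :=
  fun u => ERaddR (xi1 u) (xi2 u).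

Definition model m (xi1 : vec m -> R) (g1 : vec m -> vec m) (xi2 : vec m -> ER)
    (y : vec m) (Lk : R) : vec m -> ER :=
  fun u => ERaddR (xi1 y + inner (g1 y) (vsub u y) + Lk / 2 * (vnorm (vsub u y)) ^ 2)
                  (xi2 u).

Definition descent m (xi1 : vec m -> R) (g1 : vec m -> vec m) (y uk : vec m) (Lk : R) :=
  xi1 uk <= xi1 y + inner (g1 y) (vsub uk y) + Lk / 2 * (vnorm (vsub uk y)) ^ 2.

(* The potential Phi_k = xi(u^k) + L_k/2 |u^k - u^(k-1)|^2 drops by at least
   mu/2 |u^(k+1) - u^k|^2 per step: the step model is (L_(k+1) + mu)-strongly
   convex, the descent condition makes it majorize xi at u^(k+1), and
   omega_(k-1) <= sqrt (L_(k-1) / L_k) makes moving the centre of the model to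
   the extrapolated point cost at most L_k/2 |u^k - u^(k-1)|^2.  The same
   estimates bound Phi_(k+1) - inf xi by a multiple of the last two squared
   steps, so Phi_(k+2) - inf xi <= r (Phi_k - inf xi) with r < 1.  The steps
   therefore decay geometrically, u^k converges R-linearly, and lower
   semicontinuity makes the limit a minimiser, unique by strong convexity.
   Strong convexity is only assumed in subgradient form; it is turned into the
   inequality on values by approximating each point by proximal points, where
   subgradients exist. *)

From HB Require Import structures.
From Stdlib Require Import Reals Lra Psatz ClassicalEpsilon FunctionalExtensionality Classical.
From mathcomp Require Import ssreflect ssrfun ssrbool eqtype ssrnat fintype bigop.
Open Scope R_scope.

HB.instance Definition _ :=
  Monoid.isComLaw.Build R 0 Rplus (fun a b c => esym (Rplus_assoc a b c)) Rplus_comm Rplus_0_l.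

(** * Euclidean space and limits *)

Section FiniteSums.
Context {m : nat}.
Implicit Types F G : 'I_m -> R.

Lemma sumR_add F G :
  \big[Rplus/0]_(i < m) (F i + G i) = \big[Rplus/0]_(i < m) F i + \big[Rplus/0]_(i < m) G i.
Proof. by rewrite big_split. Qed.

Lemma sumR_mull c F :
  \big[Rplus/0]_(i < m) (c * F i) = c * \big[Rplus/0]_(i < m) F i.
Proof. by apply: (big_rec2 (fun x y => x = c * y)) => [|i x y _ ->]; lra. Qed.

Lemma sumR_divr c F :
  \big[Rplus/0]_(i < m) (F i / c) = \big[Rplus/0]_(i < m) F i / c.
Proof. by apply: (big_rec2 (fun x y => x = y / c)) => [|i x y _ ->]; rewrite /Rdiv; ring. Qed.

Lemma sumR_opp F : \big[Rplus/0]_(i < m) (- F i) = - \big[Rplus/0]_(i < m) F i.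
Proof. by apply: (big_rec2 (fun x y => x = - y)) => [|i x y _ ->]; lra. Qed.

Lemma sumR_sub F G :
  \big[Rplus/0]_(i < m) (F i - G i) = \big[Rplus/0]_(i < m) F i - \big[Rplus/0]_(i < m) G i.
Proof. by rewrite /Rminus sumR_add sumR_opp. Qed.

Lemma eq_sumR F G : (forall i, F i = G i) ->
  \big[Rplus/0]_(i < m) F i = \big[Rplus/0]_(i < m) G i.
Proof. by move=> FG; apply: eq_bigr => i _. Qed.

Lemma sumR_ge0 F : (forall i, 0 <= F i) -> 0 <= \big[Rplus/0]_(i < m) F i.
Proof. by move=> F0; apply: (big_ind (fun x => 0 <= x)) => // [|x y]; lra. Qed.

Lemma sumR_ge_term F j : (forall i, 0 <= F i) -> F j <= \big[Rplus/0]_(i < m) F i.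
Proof.
move=> F0; rewrite (bigD1 j) //= -[X in X <= _]Rplus_0_r; apply: Rplus_le_compat_l.
by apply: (big_ind (fun x => 0 <= x)) => // [|x y]; lra.
Qed.

End FiniteSums.

Ltac sumR_normalize :=
  rewrite /inner; repeat (rewrite -sumR_mull || rewrite -sumR_divr || rewrite -sumR_opp
                          || rewrite -sumR_add || rewrite -sumR_sub).

Ltac field_lra := field; repeat split; try ((apply Rgt_not_eq; lra) || (apply Rlt_not_eq; lra) || lra).

Ltac inner_ring :=
  sumR_normalize; apply: eq_sumR => i; rewrite /vadd /vsub /vscale; (ring || field_lra).

Section Euclidean.
Context {m : nat}.
Implicit Types x y z : vec m.

Lemma inner_ge0 x : 0 <= inner x x.
Proof. by apply: sumR_ge0 => i; nra. Qed.

Lemma vnorm_ge0 x : 0 <= vnorm x.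
Proof. exact: sqrt_pos. Qed.

Lemma vnorm_sqr x : vnorm x ^ 2 = inner x x.
Proof. by rewrite /vnorm /= Rmult_1_r sqrt_sqrt //; apply: inner_ge0. Qed.

Lemma inner_comm x y : inner x y = inner y x.
Proof. by apply: eq_sumR => i; ring. Qed.

Lemma Rabs_coord_le_vnorm x i : Rabs (x i) <= vnorm x.
Proof.
rewrite /vnorm -sqrt_Rsqr_abs; apply: sqrt_le_1_alt.
by rewrite /Rsqr; apply: (@sumR_ge_term _ (fun i => x i * x i)) => j; nra.
Qed.

Lemma vnorm_scale c x : vnorm (vscale c x) = Rabs c * vnorm x.
Proof.
rewrite /vnorm; have -> : inner (vscale c x) (vscale c x) = Rsqr c * inner x x by rewrite /Rsqr; inner_ring.
by rewrite sqrt_mult ?sqrt_Rsqr_abs //; [apply: Rle_0_sqr | apply: inner_ge0].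
Qed.

Lemma vnorm_sub_diag x : vnorm (vsub x x) = 0.
Proof.
have -> : vsub x x = vscale 0 x by apply: functional_extensionality => i; rewrite /vsub /vscale; ring.
by rewrite vnorm_scale Rabs_R0 Rmult_0_l.
Qed.

Lemma cauchy_schwarz x y : Rabs (inner x y) <= vnorm x * vnorm y.
Proof.
have quad s : 0 <= inner x x - 2 * s * inner x y + s ^ 2 * inner y y.
  have <- : inner (vsub x (vscale s y)) (vsub x (vscale s y)) =
            inner x x - 2 * s * inner x y + s ^ 2 * inner y y.
    by rewrite (inner_comm x y); inner_ring.
  exact: inner_ge0.
have Hx := inner_ge0 x; have Hy := inner_ge0 y.
have sq : inner x y ^ 2 <= inner x x * inner y y.
  case: (Req_dec (inner y y) 0) => Hy0.
  - case: (Req_dec (inner x y) 0) => Hxy0; first by rewrite Hxy0 Hy0; nra.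
    have := quad ((inner x x + 1) / (2 * inner x y)).
    have -> : 2 * ((inner x x + 1) / (2 * inner x y)) * inner x y = inner x x + 1 by field.
    rewrite Hy0; lra.
  - have := quad (inner x y / inner y y).
    have -> : inner x x - 2 * (inner x y / inner y y) * inner x y
              + (inner x y / inner y y) ^ 2 * inner y y
              = (inner x x * inner y y - inner x y ^ 2) / inner y y by field.
    move=> h; have : 0 <= (inner x x * inner y y - inner x y ^ 2) / inner y y * inner y y by nra.
    rewrite /Rdiv Rmult_assoc Rinv_l //; lra.
rewrite /vnorm -sqrt_mult // -sqrt_Rsqr_abs; apply: sqrt_le_1_alt.
by rewrite /Rsqr; nra.
Qed.

Lemma vnorm_triangle x y : vnorm (vadd x y) <= vnorm x + vnorm y.
Proof.
have expand : vnorm (vadd x y) ^ 2 = vnorm x ^ 2 + 2 * inner x y + vnorm y ^ 2.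
  by rewrite !vnorm_sqr; inner_ring.
have := cauchy_schwarz x y; have := Rle_abs (inner x y).
have := vnorm_ge0 x; have := vnorm_ge0 y; have := vnorm_ge0 (vadd x y).
nra.
Qed.

Lemma vsub_via x y z : vsub x z = vadd (vsub x y) (vsub y z).
Proof. by apply: functional_extensionality => i; rewrite /vsub /vadd; ring. Qed.

Lemma vnorm_sub_triangle x y z : vnorm (vsub x z) <= vnorm (vsub x y) + vnorm (vsub y z).
Proof. rewrite (vsub_via x y z); exact: vnorm_triangle. Qed.

Lemma vnorm_sub_sym x y : vnorm (vsub x y) = vnorm (vsub y x).
Proof.
have -> : vsub x y = vscale (-1) (vsub y x).
  by apply: functional_extensionality => i; rewrite /vsub /vscale; ring.
by rewrite vnorm_scale Rabs_Ropp Rabs_R1 Rmult_1_l.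
Qed.

Lemma vnorm_sub_eq0 x y : vnorm (vsub x y) = 0 -> x = y.
Proof.
move=> xy0; apply: functional_extensionality => i.
have := Rabs_coord_le_vnorm (vsub x y) i; have := Rabs_pos (x i - y i).
rewrite xy0 /vsub => ge0 le0.
apply: Rminus_diag_uniq; apply: NNPP => ne; apply: (Rabs_no_R0 _ ne); lra.
Qed.

Lemma vnorm_add_sqr_le x y {e} : 0 < e ->
  vnorm (vadd x y) ^ 2 <= (1 + e) * vnorm x ^ 2 + (1 + / e) * vnorm y ^ 2.
Proof.
move=> e0; rewrite !vnorm_sqr.
have -> : inner (vadd x y) (vadd x y) = inner x x + 2 * inner x y + inner y y by inner_ring.
have := inner_ge0 (vsub (vscale e x) y).
have -> : inner (vsub (vscale e x) y) (vsub (vscale e x) y)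
          = e ^ 2 * inner x x - 2 * e * inner x y + inner y y by inner_ring.
move=> ge0.
suff : 2 * inner x y <= e * inner x x + / e * inner y y by lra.
apply: (Rmult_le_reg_l e) => //.
have -> : e * (e * inner x x + / e * inner y y) = e ^ 2 * inner x x + inner y y by field; lra.
lra.
Qed.

End Euclidean.

Lemma Un_cv_const c : Un_cv (fun _ => c) c.
Proof. by move=> e e0; exists 0%nat => n _; rewrite /R_dist Rminus_diag Rabs_R0. Qed.

Lemma Un_cv_le u l c N : Un_cv u l -> (forall k, (N <= k)%coq_nat -> u k <= c) -> l <= c.
Proof.
move=> ul ule; apply: Rnot_lt_le => cl.
have [N' HN'] := ul (l - c) ltac:(lra).
have := HN' (Nat.max N N') (Nat.le_max_r _ _); have := ule (Nat.max N N') (Nat.le_max_l _ _).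
rewrite /R_dist Rabs_minus_sym => h1 h2.
have := Rle_abs (l - u (Nat.max N N')); lra.
Qed.

Lemma inv_succ_lt {e} : 0 < e -> exists N, forall n, (N <= n)%coq_nat -> / (INR n + 1) < e.
Proof.
move=> e0; have [N HN] := @RinvN_cv e e0; exists N => n /HN.
rewrite /R_dist Rminus_0_r Rabs_right //; apply: Rle_ge; apply: Rlt_le; exact: RinvN_pos.
Qed.

Lemma Rle_of_le_add_small {A B} C : (forall t, 0 < t < 1 -> A <= B + C * t) -> A <= B.
Proof.
move=> H; apply: Rnot_lt_le => BA.
have C0 := Rabs_pos C.
pose t := (A - B) / (2 * (A - B + Rabs C)).
have t01 : 0 < t < 1.
  split; first by apply: Rdiv_lt_0_compat; lra.
  by apply: (Rmult_lt_reg_r (2 * (A - B + Rabs C))); [lra | rewrite /t /Rdiv Rmult_assoc Rinv_l; lra].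
have Ct : C * t <= Rabs C * t by have := Rle_abs C; nra.
have : Rabs C * t < A - B.
  have -> : Rabs C * t = Rabs C / (A - B + Rabs C) * ((A - B) / 2) by rewrite /t; field_lra.
  have : Rabs C / (A - B + Rabs C) <= 1.
    by apply: (Rmult_le_reg_r (A - B + Rabs C)); [lra | rewrite /Rdiv Rmult_assoc Rinv_l; lra].
  nra.
have := H t t01; lra.
Qed.

Lemma exists_inf (S : R -> Prop) b :
  (exists r, S r) -> (forall r, S r -> b <= r) ->
  exists I, (forall r, S r -> I <= r) /\ (forall e, 0 < e -> exists r, S r /\ r < I + e).
Proof.
move=> [r0 Sr0] Sb.
have bnd : bound (fun x => S (- x)) by exists (- b) => x /Sb; lra.
have ne : exists x, S (- x) by exists (- r0); rewrite Ropp_involutive.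
have [M [Mub Mlub]] := completeness _ bnd ne.
exists (- M); split => [r Sr | e e0].
  by have := Mub (- r); rewrite Ropp_involutive => /(_ Sr); lra.
apply: NNPP => noS; have : M <= M - e; last lra.
apply: Mlub => x Sx; apply: Rnot_lt_le => lt.
by apply: noS; exists (- x); split => //; lra.
Qed.

Lemma sumR_cv m (F : nat -> 'I_m -> R) (G : 'I_m -> R) :
  (forall i, Un_cv (fun k => F k i) (G i)) ->
  Un_cv (fun k => \big[Rplus/0]_(i < m) F k i) (\big[Rplus/0]_(i < m) G i).
Proof.
elim: m F G => [|n IH] F G FG.
  by rewrite big_ord0; apply: (Un_cv_ext (fun _ => 0)) (Un_cv_const 0) => k; rewrite big_ord0.
rewrite big_ord_recr /=.
apply: (Un_cv_ext (fun k => \big[Rplus/0]_(i < n) F k (widen_ord (leqnSn n) i) + F k ord_max)).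
  by move=> k; rewrite big_ord_recr.
by apply: CV_plus; [apply: IH => i | apply: FG].
Qed.

Section VectorSequences.
Context {m : nat}.
Implicit Types xs : nat -> vec m.

Lemma vcauchy_cv xs :
  (forall eps, 0 < eps -> exists N, forall n k, (N <= n)%coq_nat -> (N <= k)%coq_nat ->
     vnorm (vsub (xs n) (xs k)) < eps) -> exists a, vconv xs a.
Proof.
move=> Hc.
have coord_cauchy i : Cauchy_crit (fun n => xs n i).
  move=> e e0; have [N HN] := Hc e e0; exists N => n k hn hk.
  have := Rabs_coord_le_vnorm (vsub (xs n) (xs k)) i; have := HN n k hn hk.
  by rewrite /R_dist /vsub; lra.
pose a i := proj1_sig (R_complete _ (coord_cauchy i)).
have Ha i : Un_cv (fun n => xs n i) (a i) := proj2_sig (R_complete _ (coord_cauchy i)).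
exists a => e e0; have [N HN] := Hc (e / 2) ltac:(lra); exists N => n hn.
have lim : inner (vsub (xs n) a) (vsub (xs n) a) <= (e / 2) ^ 2.
  apply: (Un_cv_le (fun k => inner (vsub (xs n) (xs k)) (vsub (xs n) (xs k))) _ _ N).
    by apply: sumR_cv => i; apply: CV_mult; apply: CV_minus; (apply: Un_cv_const || apply: Ha).
  move=> k hk; rewrite -vnorm_sqr.
  by have := HN n k hn hk; have := vnorm_ge0 (vsub (xs n) (xs k)); nra.
by have := vnorm_sqr (vsub (xs n) a); have := vnorm_ge0 (vsub (xs n) a); nra.
Qed.

Lemma vconv_dist {xs a} b :
  vconv xs a -> Un_cv (fun n => vnorm (vsub (xs n) b)) (vnorm (vsub a b)).
Proof.
move=> xa e e0; have [N HN] := xa e e0; exists N => n /HN hn.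
have := vnorm_sub_triangle (xs n) a b; have := vnorm_sub_triangle a (xs n) b.
by rewrite (vnorm_sub_sym a (xs n)) /R_dist => *; apply: Rabs_def1; lra.
Qed.

Lemma vconv_of_bound {xs a c} :
  Un_cv c 0 -> (forall n, vnorm (vsub (xs n) a) <= c n) -> vconv xs a.
Proof.
move=> c0 bnd e e0; have [N HN] := c0 e e0; exists N => n /HN.
by rewrite /R_dist Rminus_0_r => h; have := Rle_abs (c n); have := bnd n; lra.
Qed.

End VectorSequences.

Definition ev {m} (f : vec m -> ER) x : R := if f x is Some r then r else 0.

Lemma ev_dom {m} {f : vec m -> ER} {x} : dom f x -> f x = Some (ev f x).
Proof. by rewrite /dom /ev; case: (f x). Qed.

Lemma ERle_Some {m} {f : vec m -> ER} {x r} : ERle (f x) (Some r) -> dom f x /\ ev f x <= r.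
Proof. by rewrite /dom /ev; case: (f x). Qed.

(** * Closed convex functions and proximal points *)

Section ClosedConvexFunction.
Context {m : nat}.
Context {f : vec m -> ER}.
Hypothesis f_closed : closed_fun f.
Hypothesis f_convex : convex_efun f.

Lemma convex_efun_ev {x y t} : dom f x -> dom f y -> 0 <= t <= 1 ->
  dom f (vadd (vscale t x) (vscale (1 - t) y)) /\
  ev f (vadd (vscale t x) (vscale (1 - t) y)) <= t * ev f x + (1 - t) * ev f y.
Proof.
move=> fx fy t01; have [vx [vy [ex [ey le]]]] := f_convex x y t fx fy t01.
by have := ERle_Some le; rewrite /ev ex ey.
Qed.

Lemma closed_fun_ev {xs : nat -> vec m} {rs : nat -> R} {x r} :
  (forall n, dom f (xs n)) -> (forall n, ev f (xs n) <= rs n) -> vconv xs x -> Un_cv rs r ->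
  dom f x /\ ev f x <= r.
Proof.
move=> fxs le xsx rsr; apply: ERle_Some; apply: (f_closed xs rs) => // n.
by rewrite (ev_dom (fxs n)); apply: le.
Qed.

Lemma closed_fun_bounded_below_near {a} : dom f a ->
  exists d, 0 < d /\ forall w, dom f w -> vnorm (vsub w a) < d -> ev f a - 1 <= ev f w.
Proof.
move=> fa; apply: NNPP => nobound.
have bad n : exists w, dom f w /\ vnorm (vsub w a) < / (INR n + 1) /\ ev f w < ev f a - 1.
  apply: NNPP => nobad; apply: nobound; exists (/ (INR n + 1)); split; first exact: RinvN_pos.
  by move=> w fw wa; apply: Rnot_lt_le => lt; apply: nobad; exists w.
have [ws Hws] := choice _ bad.
have [_ le] := closed_fun_ev (rs := fun _ => ev f a - 1)
  (fun n => proj1 (Hws n)) (fun n => Rlt_le _ _ (proj2 (proj2 (Hws n))))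
  (vconv_of_bound RinvN_cv (fun n => Rlt_le _ _ (proj1 (proj2 (Hws n))))) (Un_cv_const _).
lra.
Qed.

(* Convexity propagates the local lower bound of a closed function to a
   global affine-in-the-distance minorant. *)
Lemma closed_convex_minorant {a} : dom f a ->
  exists d, 0 < d /\ forall w, dom f w -> ev f a - 1 - vnorm (vsub w a) / d <= ev f w.
Proof.
move=> fa; have [d [d0 near]] := closed_fun_bounded_below_near fa.
exists (d / 2); split => [|w fw]; first lra.
set r := vnorm (vsub w a); have r0 : 0 <= r := vnorm_ge0 _.
case: (Rlt_le_dec r d) => [rd | dr].
  have : 0 <= r / (d / 2) by apply: Rle_mult_inv_pos; lra.
  by have := near w fw rd; lra.
pose s := (d / 2) / r.
have s0 : 0 < s by apply: Rdiv_lt_0_compat; lra.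
have s1 : s <= 1 by apply: (Rmult_le_reg_r r); [lra | rewrite /s /Rdiv Rmult_assoc Rinv_l; lra].
have [fp lep] := convex_efun_ev fw fa (conj (Rlt_le _ _ s0) s1).
have pa : vsub (vadd (vscale s w) (vscale (1 - s) a)) a = vscale s (vsub w a).
  by apply: functional_extensionality => i; rewrite /vsub /vadd /vscale; ring.
have sr : s * r = d / 2 by rewrite /s; field_lra.
have := near _ fp; rewrite pa vnorm_scale Rabs_right -/r ?sr; last lra.
move=> /(_ ltac:(lra)) ge.
have -> : r / (d / 2) = / s by rewrite /s; field; split; lra.
apply: (Rmult_le_reg_l s) => //.
have -> : s * (ev f a - 1 - / s) = s * ev f a - s - 1 by field; lra.
lra.
Qed.

Definition prox_obj a lam w := ev f w + vnorm (vsub w a) ^ 2 / (2 * lam).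

Lemma prox_obj_bounded_below {a lam} : dom f a -> 0 < lam ->
  exists b, forall w, dom f w -> b <= prox_obj a lam w.
Proof.
move=> fa lam0; have [d [d0 minor]] := closed_convex_minorant fa.
exists (ev f a - 1 - lam / (2 * d ^ 2)) => w fw; rewrite /prox_obj.
have := minor w fw; have := vnorm_ge0 (vsub w a); set q := vnorm (vsub w a) => q0 le.
have : 0 <= (q - lam / d) ^ 2 / (2 * lam) by apply: Rle_mult_inv_pos; [apply: pow2_ge_0 | lra].
have -> : (q - lam / d) ^ 2 / (2 * lam) = q ^ 2 / (2 * lam) - q / d + lam / (2 * d ^ 2) by field_lra.
lra.
Qed.

(* Parallelogram law: the proximal objective is (1/lam)-strongly convex, so
   two near-minimisers are close. *)
Lemma prox_near_min_close {a lam I w1 w2 e1 e2} : 0 < lam ->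
  (forall w, dom f w -> I <= prox_obj a lam w) -> dom f w1 -> dom f w2 ->
  prox_obj a lam w1 < I + e1 -> prox_obj a lam w2 < I + e2 ->
  vnorm (vsub w1 w2) ^ 2 <= 4 * lam * (e1 + e2).
Proof.
move=> lam0 Ilb fw1 fw2 lt1 lt2.
have [fc lec] := convex_efun_ev fw1 fw2 (t := 1 / 2) ltac:(lra).
have := Ilb _ fc; rewrite /prox_obj in lt1 lt2 *.
have -> : vnorm (vsub (vadd (vscale (1 / 2) w1) (vscale (1 - 1 / 2) w2)) a) ^ 2 / (2 * lam)
          = vnorm (vsub w1 a) ^ 2 / (2 * lam) / 2 + vnorm (vsub w2 a) ^ 2 / (2 * lam) / 2
            - vnorm (vsub w1 w2) ^ 2 / (8 * lam).
  by rewrite !vnorm_sqr; inner_ring.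
move=> le.
have : vnorm (vsub w1 w2) ^ 2 / (8 * lam) < (e1 + e2) / 2 by lra.
move=> lt; apply: (Rmult_le_reg_r (/ (8 * lam))); first by apply: Rinv_0_lt_compat; lra.
have -> : 4 * lam * (e1 + e2) * / (8 * lam) = (e1 + e2) / 2 by field_lra.
by rewrite /Rdiv in lt; lra.
Qed.

Lemma prox_exists a lam : dom f a -> 0 < lam ->
  exists p, dom f p /\ forall w, dom f w -> prox_obj a lam p <= prox_obj a lam w.
Proof.
move=> fa lam0; have [b lb] := prox_obj_bounded_below fa lam0.
have lb' r : (exists w, dom f w /\ r = prox_obj a lam w) -> b <= r by move=> [w [fw ->]]; apply: lb.
have [I [Ilb Iapprox]] := exists_inf (fun r => exists w, dom f w /\ r = prox_obj a lam w) b
  (ex_intro _ _ (ex_intro _ a (conj fa erefl))) lb'.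
have Ilb' w : dom f w -> I <= prox_obj a lam w by move=> fw; apply: Ilb; exists w.
have near n : exists w, dom f w /\ prox_obj a lam w < I + / (INR n + 1).
  by have [_ [[w [fw ->]] lt]] := Iapprox _ (RinvN_pos n); exists w.
have [ws Hws] := choice _ near.
have [p wsp] : exists p, vconv ws p.
  apply: vcauchy_cv => e e0.
  have [N HN] := inv_succ_lt (e := e ^ 2 / (8 * lam)) ltac:(apply: Rdiv_lt_0_compat; nra).
  exists N => n k /HN hn /HN hk.
  have := prox_near_min_close lam0 Ilb' (proj1 (Hws n)) (proj1 (Hws k)) (proj2 (Hws n)) (proj2 (Hws k)).
  have : 4 * lam * (/ (INR n + 1) + / (INR k + 1)) < e ^ 2.
    have -> : e ^ 2 = 4 * lam * (e ^ 2 / (8 * lam) + e ^ 2 / (8 * lam)) by field_lra.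
    by apply: Rmult_lt_compat_l; lra.
  by have := vnorm_ge0 (vsub (ws n) (ws k)); nra.
have obj_cv : Un_cv (fun n => prox_obj a lam (ws n)) I.
  move=> e e0; have [N HN] := inv_succ_lt e0; exists N => n /HN hn.
  have := proj2 (Hws n); have := Ilb' _ (proj1 (Hws n)).
  by rewrite /R_dist => *; apply: Rabs_def1; lra.
have dist_cv : Un_cv (fun n => vnorm (vsub (ws n) a) ^ 2 / (2 * lam)) (vnorm (vsub p a) ^ 2 / (2 * lam)).
  have := vconv_dist a wsp => cv.
  apply: (Un_cv_ext (fun n => vnorm (vsub (ws n) a) * vnorm (vsub (ws n) a) * / (2 * lam))).
    by move=> n; rewrite /Rdiv /=; ring.
  have -> : vnorm (vsub p a) ^ 2 / (2 * lam) = vnorm (vsub p a) * vnorm (vsub p a) * / (2 * lam).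
    by rewrite /Rdiv /=; ring.
  by apply: CV_mult; [apply: CV_mult | apply: Un_cv_const].
have [fp lep] := closed_fun_ev (rs := fun n => prox_obj a lam (ws n) - vnorm (vsub (ws n) a) ^ 2 / (2 * lam))
  (fun n => proj1 (Hws n)) (fun n => ltac:(rewrite /prox_obj; lra)) wsp (CV_minus _ _ _ _ obj_cv dist_cv).
exists p; split => // w fw.
by have := Ilb' w fw; rewrite /prox_obj in lep *; lra.
Qed.

Lemma prox_subgrad {a lam p} : 0 < lam -> dom f p ->
  (forall w, dom f w -> prox_obj a lam p <= prox_obj a lam w) ->
  subgrad f p (vscale (/ lam) (vsub a p)).
Proof.
move=> lam0 fp pmin; exists (ev f p); split; first exact: ev_dom.
move=> u; case fu: (f u) => [vu|] //=.
have {}fu : f u = Some vu by [].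
have du : dom f u by rewrite /dom fu.
have -> : vu = ev f u by rewrite /ev fu.
have -> : inner (vscale (/ lam) (vsub a p)) (vsub u p) = - (inner (vsub p a) (vsub u p) / lam).
  by inner_ring.
suff : ev f p <= ev f u + inner (vsub p a) (vsub u p) / lam by lra.
apply: (Rle_of_le_add_small (vnorm (vsub u p) ^ 2 / (2 * lam))) => t t01.
have [fw lew] := convex_efun_ev du fp (t := t) ltac:(lra).
have := pmin _ fw; rewrite /prox_obj.
have -> : vnorm (vsub (vadd (vscale t u) (vscale (1 - t) p)) a) ^ 2 / (2 * lam)
          = vnorm (vsub p a) ^ 2 / (2 * lam) + t * (inner (vsub p a) (vsub u p) / lam)
            + t * (t * (vnorm (vsub u p) ^ 2 / (2 * lam))).
  by rewrite !vnorm_sqr; inner_ring.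
move=> le; apply: (Rmult_le_reg_l t); lra.
Qed.

Lemma prox_dist_sqr_le {a lam p d} : 0 < lam -> 0 < d ->
  (forall w, dom f w -> ev f a - 1 - vnorm (vsub w a) / d <= ev f w) ->
  dom f a -> dom f p ->
  (forall w, dom f w -> prox_obj a lam p <= prox_obj a lam w) ->
  vnorm (vsub p a) ^ 2 <= 4 * lam + 4 * lam ^ 2 / d ^ 2.
Proof.
move=> lam0 d0 minor fa fp pmin.
have := pmin a fa; rewrite /prox_obj vnorm_sub_diag.
have := minor p fp; have := vnorm_ge0 (vsub p a); set r := vnorm (vsub p a) => r0 h1 h2.
have h3 : r ^ 2 / (2 * lam) <= 1 + r / d.
  have : 0 ^ 2 / (2 * lam) = 0 by field_lra.
  lra.
have h4 : r ^ 2 <= 2 * lam + 2 * lam * (r / d).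
  have := Rmult_le_compat_l (2 * lam) _ _ ltac:(lra) h3.
  have -> : 2 * lam * (r ^ 2 / (2 * lam)) = r ^ 2 by field_lra.
  lra.
have : 0 <= (r - 2 * lam / d) ^ 2 / 2 by apply: Rle_mult_inv_pos; [apply: pow2_ge_0 | lra].
have -> : (r - 2 * lam / d) ^ 2 / 2 = r ^ 2 / 2 + 2 * lam ^ 2 / d ^ 2 - 2 * lam * (r / d) by field_lra.
lra.
Qed.

Section StrongConvexity.
Context {mu : R}.
Hypothesis mu_ge0 : 0 <= mu.
Hypothesis f_strongly_convex : strongly_convex f mu.

(* Strong convexity is only postulated at points carrying a subgradient;
   proximal points do carry one (prox_subgrad). *)
Lemma prox_le_strong_combination {x z t lam p} : 0 < lam ->
  dom f x -> dom f z -> 0 <= t <= 1 -> dom f p ->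
  (forall w, dom f w -> prox_obj (vadd (vscale t x) (vscale (1 - t) z)) lam p <=
                        prox_obj (vadd (vscale t x) (vscale (1 - t) z)) lam w) ->
  ev f p <= t * ev f x + (1 - t) * ev f z - mu / 2 * (t * (1 - t)) * vnorm (vsub x z) ^ 2.
Proof.
set w := vadd (vscale t x) (vscale (1 - t) z) => lam0 fx fz t01 fp pmin.
have gp := prox_subgrad lam0 fp pmin; set g := vscale (/ lam) (vsub w p) in gp.
have Ex := f_strongly_convex _ _ _ _ _ (ev_dom fx) (ev_dom fp) gp.
have Ez := f_strongly_convex _ _ _ _ _ (ev_dom fz) (ev_dom fp) gp.
have Eg : t * inner g (vsub x p) + (1 - t) * inner g (vsub z p) = / lam * inner (vsub w p) (vsub w p).
  by rewrite /g /w; inner_ring.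
have En : t * vnorm (vsub x p) ^ 2 + (1 - t) * vnorm (vsub z p) ^ 2 =
          vnorm (vsub w p) ^ 2 + t * (1 - t) * vnorm (vsub x z) ^ 2.
  by rewrite !vnorm_sqr /w; inner_ring.
have : 0 <= / lam * inner (vsub w p) (vsub w p).
  by apply: Rmult_le_pos; [apply: Rlt_le; apply: Rinv_0_lt_compat | apply: inner_ge0].
have := pow2_ge_0 (vnorm (vsub w p)).
apply Rge_le in Ex; apply Rge_le in Ez.
have := Rmult_le_compat_l t _ _ (proj1 t01) Ex.
have := Rmult_le_compat_l (1 - t) _ _ ltac:(lra) Ez.
nra.
Qed.

(* Proximal points of w with parameter 1/(n+1)^2 converge to w, and
   closedness passes the bound of prox_le_strong_combination to w. *)
Lemma strongly_convex_ev {x z t} : dom f x -> dom f z -> 0 <= t <= 1 ->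
  dom f (vadd (vscale t x) (vscale (1 - t) z)) /\
  ev f (vadd (vscale t x) (vscale (1 - t) z)) <=
    t * ev f x + (1 - t) * ev f z - mu / 2 * (t * (1 - t)) * vnorm (vsub x z) ^ 2.
Proof.
set w := vadd (vscale t x) (vscale (1 - t) z) => fx fz t01.
have [fw _] := convex_efun_ev fx fz t01; split => //.
have [d [d0 minor]] := closed_convex_minorant fw.
pose lam n := (/ (INR n + 1)) ^ 2.
have lam01 n : 0 < lam n <= 1.
  have := RinvN_pos n; have : / (INR n + 1) <= 1.
    by have := pos_INR n => n0; rewrite -Rinv_1; apply: Rinv_le_contravar; lra.
  by rewrite /lam; split; nra.
have [ps Hps] := choice _ (fun n => prox_exists w (lam n) fw (proj1 (lam01 n))).
pose K := 4 + 4 / d ^ 2.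
have K0 : 0 <= K by apply: Rplus_le_le_0_compat; [lra | apply: Rle_mult_inv_pos; nra].
have ps_cv : vconv ps w.
  apply: (vconv_of_bound (c := fun n => sqrt K * / (INR n + 1))).
    by rewrite -(Rmult_0_r (sqrt K)); apply: CV_mult; [apply: Un_cv_const | apply: RinvN_cv].
  move=> n; have [fp pmin] := Hps n; have [l0 l1] := lam01 n.
  have := prox_dist_sqr_le l0 d0 minor fw fp pmin.
  have : 4 * lam n + 4 * lam n ^ 2 / d ^ 2 <= K * lam n.
    have -> : K * lam n = 4 * lam n + 4 * lam n / d ^ 2 by rewrite /K; field_lra.
    suff : 4 * lam n ^ 2 / d ^ 2 <= 4 * lam n / d ^ 2 by lra.
    by rewrite /Rdiv; apply: Rmult_le_compat_r; [apply: Rlt_le; apply: Rinv_0_lt_compat; nra | nra].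
  rewrite -/w => le1 le2.
  have sq : vnorm (vsub (ps n) w) ^ 2 <= (sqrt K * / (INR n + 1)) ^ 2.
    have sK : sqrt K ^ 2 = K by rewrite /= Rmult_1_r sqrt_sqrt.
    by rewrite Rpow_mult_distr sK -/(lam n); lra.
  have := Rmult_le_pos _ _ (sqrt_pos K) (Rlt_le _ _ (RinvN_pos n)).
  have := vnorm_ge0 (vsub (ps n) w); nra.
have [_ le] := closed_fun_ev (fun n => proj1 (Hps n))
  (fun n => prox_le_strong_combination (proj1 (lam01 n)) fx fz t01 (proj1 (Hps n)) (proj2 (Hps n)))
  ps_cv (Un_cv_const _).
exact: le.
Qed.

End StrongConvexity.

End ClosedConvexFunction.

(** * The proximal gradient step *)

Section ConvexDifferentiable.
Context {m : nat}.
Context {h : vec m -> R} {g : vec m -> vec m}.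
Hypothesis h_convex : convex_fun h.
Hypothesis h_grad : is_gradient h g.

Lemma convex_gradient_ineq y z : h y + inner (g y) (vsub z y) <= h z.
Proof.
set v := vsub z y; have v0 := vnorm_ge0 v.
suff : inner (g y) v <= h z - h y by lra.
apply: (Rle_of_le_add_small (vnorm v)) => e e01.
have [d [d0 Hd]] := h_grad y e ltac:(lra).
pose t := Rmin (1 / 2) (d / (2 * (vnorm v + 1))).
have t0 : 0 < t by apply: Rmin_pos; [lra | apply: Rdiv_lt_0_compat; lra].
have t1 : t <= 1 / 2 := Rmin_l _ _.
have td : t * vnorm v < d.
  have tr : t <= d / (2 * (vnorm v + 1)) := Rmin_r _ _.
  have : t * vnorm v <= d / (2 * (vnorm v + 1)) * vnorm v by nra.
  have -> : d / (2 * (vnorm v + 1)) * vnorm v = d * (vnorm v / (2 * (vnorm v + 1))) by field_lra.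
  have : vnorm v / (2 * (vnorm v + 1)) < 1.
    by apply: (Rmult_lt_reg_r (2 * (vnorm v + 1))); [lra | rewrite /Rdiv Rmult_assoc Rinv_l; lra].
  nra.
have := Hd (vscale t v); rewrite vnorm_scale Rabs_right; last lra.
move=> /(_ td).
have -> : vadd y (vscale t v) = vadd (vscale t z) (vscale (1 - t) y).
  by apply: functional_extensionality => i; rewrite /vadd /vscale /v /vsub; ring.
have -> : inner (g y) (vscale t v) = t * inner (g y) v by inner_ring.
move=> approx; have conv := h_convex z y t ltac:(lra).
have := Rle_abs (- (h (vadd (vscale t z) (vscale (1 - t) y)) - h y - t * inner (g y) v)).
rewrite Rabs_Ropp => abs.
have : t * (inner (g y) v - e * vnorm v) <= t * (h z - h y) by nra.
move=> /(Rmult_le_reg_l t _ _ t0); lra.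
Qed.

Lemma gradient_continuous {xs : nat -> vec m} {a} : vconv xs a -> Un_cv (fun n => h (xs n)) (h a).
Proof.
move=> xsa e e0.
have [d [d0 Hd]] := h_grad a 1 ltac:(lra).
pose G := vnorm (g a) + 1.
have G0 : 0 < G by have := vnorm_ge0 (g a); rewrite /G; lra.
have [N HN] := xsa (Rmin d (e / (2 * G))) ltac:(apply: Rmin_pos => //; apply: Rdiv_lt_0_compat; lra).
exists N => n /HN near.
have nd : vnorm (vsub (xs n) a) < d by have := Rmin_l d (e / (2 * G)); lra.
have ne : vnorm (vsub (xs n) a) < e / (2 * G) by have := Rmin_r d (e / (2 * G)); lra.
have := Hd _ nd.
have -> : vadd a (vsub (xs n) a) = xs n by apply: functional_extensionality => i; rewrite /vadd /vsub; ring.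
move=> approx.
have lip : Rabs (h (xs n) - h a) <= G * vnorm (vsub (xs n) a).
  have := Rabs_triang (h (xs n) - h a - inner (g a) (vsub (xs n) a)) (inner (g a) (vsub (xs n) a)).
  have -> : h (xs n) - h a - inner (g a) (vsub (xs n) a) + inner (g a) (vsub (xs n) a) = h (xs n) - h a by ring.
  by have := cauchy_schwarz (g a) (vsub (xs n) a); rewrite /G; nra.
have : G * vnorm (vsub (xs n) a) < G * (e / (2 * G)) by apply: Rmult_lt_compat_l.
have -> : G * (e / (2 * G)) = e / 2 by field_lra.
by rewrite /R_dist; lra.
Qed.

End ConvexDifferentiable.

Section ProximalGradientStep.
Context {m : nat}.
Variables (U : vec m -> Prop) (xi1 : vec m -> R) (g1 : vec m -> vec m) (xi2 : vec m -> ER) (mu : R).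
Hypothesis U_convex : vconvex_set U.
Hypothesis xi1_convex : convex_fun xi1.
Hypothesis xi1_grad : is_gradient xi1 g1.
Hypothesis xi2_closed : closed_fun xi2.
Hypothesis xi2_convex : convex_efun xi2.
Hypothesis mu_gt0 : 0 < mu.
Hypothesis xi2_strongly_convex : strongly_convex xi2 mu.

Definition linearization y Lk w := xi1 y + inner (g1 y) (vsub w y) + Lk / 2 * vnorm (vsub w y) ^ 2.
Definition objective w := xi1 w + ev xi2 w.

Lemma xi_sum_objective {w} : dom xi2 w -> xi_sum xi1 xi2 w = Some (objective w).
Proof. by move=> dw; rewrite /xi_sum (ev_dom dw). Qed.

(* The model is (Lk + mu)-strongly convex, so it grows quadratically away
   from its minimiser over the convex set U. *)
Lemma model_min_growth {y Lk x z} : 0 < Lk ->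
  is_min_over U (model xi1 g1 xi2 y Lk) x -> U z -> dom xi2 z ->
  dom xi2 x /\
  linearization y Lk x + ev xi2 x + (Lk + mu) / 2 * vnorm (vsub z x) ^ 2
    <= linearization y Lk z + ev xi2 z.
Proof.
move=> Lk0 [Ux xmin] Uz dz.
have model_ev w : dom xi2 w -> model xi1 g1 xi2 y Lk w = Some (linearization y Lk w + ev xi2 w).
  by move=> dw; rewrite /model (ev_dom dw).
have dx : dom xi2 x by have := xmin z Uz; rewrite (model_ev z dz) /model /dom; case: (xi2 x).
split => //.
have le w : U w -> dom xi2 w -> linearization y Lk x + ev xi2 x <= linearization y Lk w + ev xi2 w.
  by move=> Uw dw; have := xmin w Uw; rewrite (model_ev w dw) (model_ev x dx).
set N := vnorm (vsub z x) ^ 2.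
suff : linearization y Lk x + ev xi2 x <= linearization y Lk z + ev xi2 z - (Lk + mu) / 2 * N.
  lra.
apply: (Rle_of_le_add_small ((Lk + mu) / 2 * N)) => t t01.
set w := vadd (vscale t z) (vscale (1 - t) x).
have [dw sc] := strongly_convex_ev xi2_closed xi2_convex (Rlt_le _ _ mu_gt0) xi2_strongly_convex
  dz dx (t := t) ltac:(lra).
have lin : linearization y Lk w = t * linearization y Lk z + (1 - t) * linearization y Lk x
                                  - Lk / 2 * (t * (1 - t)) * N.
  have lin1 : inner (g1 y) (vsub w y) = t * inner (g1 y) (vsub z y) + (1 - t) * inner (g1 y) (vsub x y).
    by rewrite /w; inner_ring.
  have lin2 : inner (vsub w y) (vsub w y) = t * inner (vsub z y) (vsub z y)
              + (1 - t) * inner (vsub x y) (vsub x y) - t * (1 - t) * inner (vsub z x) (vsub z x).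
    by rewrite /w; inner_ring.
  by rewrite /linearization /N !vnorm_sqr lin1 lin2; ring.
have := le w (U_convex z x t Uz Ux ltac:(lra)) dw; rewrite lin -/w -/N in sc * => lew.
apply: (Rmult_le_reg_l t); first lra.
have -> : t * (linearization y Lk z + ev xi2 z - (Lk + mu) / 2 * N + (Lk + mu) / 2 * N * t)
          = t * linearization y Lk z + t * ev xi2 z - (Lk + mu) / 2 * (t * (1 - t)) * N by ring.
nra.
Qed.

Lemma prox_grad_step_ineq {y Lk x z} : 0 < Lk ->
  is_min_over U (model xi1 g1 xi2 y Lk) x -> descent xi1 g1 y x Lk -> U z -> dom xi2 z ->
  dom xi2 x /\
  objective x + (Lk + mu) / 2 * vnorm (vsub z x) ^ 2 <= objective z + Lk / 2 * vnorm (vsub z y) ^ 2.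
Proof.
move=> Lk0 xmin desc Uz dz; have [dx growth] := model_min_growth Lk0 xmin Uz dz.
split => //; have := convex_gradient_ineq xi1_convex xi1_grad y z.
by move: desc growth; rewrite /descent /objective /linearization; lra.
Qed.

Lemma prox_grad_step_gap {y Lk x z} : 0 < Lk ->
  is_min_over U (model xi1 g1 xi2 y Lk) x -> descent xi1 g1 y x Lk -> U z -> dom xi2 z ->
  objective x - objective z <= Lk / 2 * (1 + Lk / mu) * vnorm (vsub x y) ^ 2.
Proof.
move=> Lk0 xmin desc Uz dz; have [_ step] := prox_grad_step_ineq Lk0 xmin desc Uz dz.
have tri := vnorm_add_sqr_le (vsub z x) (vsub x y) (Rdiv_lt_0_compat _ _ mu_gt0 Lk0).
rewrite -vsub_via in tri.
have -> : Lk / 2 * (1 + Lk / mu) = Lk / 2 * (1 + / (mu / Lk)) by field_lra.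
have : Lk / 2 * vnorm (vsub z y) ^ 2 <=
       (Lk + mu) / 2 * vnorm (vsub z x) ^ 2 + Lk / 2 * (1 + / (mu / Lk)) * vnorm (vsub x y) ^ 2.
  have -> : (Lk + mu) / 2 = Lk / 2 * (1 + mu / Lk) by field_lra.
  by rewrite !Rmult_assoc -Rmult_plus_distr_l; apply: Rmult_le_compat_l; lra.
lra.
Qed.

Lemma min_over_unique {u v} :
  is_min_over U (xi_sum xi1 xi2) u -> is_min_over U (xi_sum xi1 xi2) v -> dom xi2 u -> v = u.
Proof.
move=> [Uu umin] [Uv vmin] du.
have := vmin u Uu; rewrite (xi_sum_objective du) /xi_sum.
case ev2: (xi2 v) => [rv|] //= vu.
have dv : dom xi2 v by rewrite /dom ev2.
have [dw sc] := strongly_convex_ev xi2_closed xi2_convex (Rlt_le _ _ mu_gt0) xi2_strongly_convex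
  dv du (t := 1 / 2) ltac:(lra).
have := umin _ (U_convex v u (1 / 2) Uv Uu ltac:(lra)).
rewrite (xi_sum_objective du) (xi_sum_objective dw) /objective /= => uw.
have evv : ev xi2 v = rv by rewrite /ev ev2.
have := xi1_convex v u (1 / 2) ltac:(lra).
rewrite /objective evv in vu sc => cvx.
have sq0 : vnorm (vsub v u) ^ 2 <= 0 by nra.
by apply: vnorm_sub_eq0; have := vnorm_ge0 (vsub v u); nra.
Qed.

End ProximalGradientStep.

(** * Linear convergence *)

Lemma geometric_of_two_step_contraction (a : nat -> R) r :
  0 <= r < 1 -> (forall k, 0 <= a k) -> (forall k, a (S k) <= a k) ->
  (forall k, a (S (S k)) <= r * a k) ->
  exists M tau, 0 <= M /\ 0 < tau < 1 /\ forall k, a k <= M * (tau ^ k) ^ 2.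
Proof.
move=> r01 a0 a_decr a_contr.
pose tau := (3 + r) / 4; pose sig := tau ^ 2.
have tau01 : 0 < tau < 1 by rewrite /tau; lra.
have sig0 : 0 < sig by rewrite /sig; nra.
have sig1 : sig <= 1 by rewrite /sig; nra.
(* with x = (1 - r) / 4: sig ^ 2 = (1 - x) ^ 4 >= 1 - 4 x = r *)
have r_sig : r <= sig ^ 2.
  have -> : sig ^ 2 = (1 - (1 - r) / 4) ^ 4 by rewrite /sig /tau; field.
  have : 0 <= (1 - r) / 4 <= 1 by lra.
  set x := (1 - r) / 4 => x01; have -> : r = 1 - 4 * x by rewrite /x; field.
  nra.
pose M := a 0%nat / sig.
have bound k : a k <= M * sig ^ k /\ a (S k) <= M * sig ^ S k.
  elim: k => [|k [IH1 IH2]].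
    have hM : M * sig = a 0%nat by rewrite /M; field_lra.
    rewrite /= !Rmult_1_r hM; split; last exact: a_decr.
    by rewrite -hM; have := a0 0%nat; nra.
  split => //.
  have : r * a k <= sig ^ 2 * (M * sig ^ k) by apply: Rmult_le_compat; [lra | apply: a0 | lra | lra].
  have -> : sig ^ 2 * (M * sig ^ k) = M * sig ^ S (S k) by rewrite /=; ring.
  by have := a_contr k; lra.
exists M, tau; split; first by apply: Rle_mult_inv_pos; [apply: a0 | lra].
split => // k; have [le _] := bound k.
by rewrite -pow_mult Nat.mul_comm pow_mult.
Qed.

Section GeometricSteps.
Context {m : nat}.
Variables (x : nat -> vec m) (D tau : R).
Hypothesis D_ge0 : 0 <= D.
Hypothesis tau01 : 0 < tau < 1.
Hypothesis steps : forall k, vnorm (vsub (x (S k)) (x k)) <= D * tau ^ k.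

Lemma geometric_steps_tail k n : vnorm (vsub (x (k + n)%nat) (x k)) <= D / (1 - tau) * tau ^ k.
Proof.
suff partial : vnorm (vsub (x (k + n)%nat) (x k)) <= D * tau ^ k * (1 - tau ^ n) / (1 - tau).
  have := pow_le tau n ltac:(lra); have := pow_le tau k ltac:(lra).
  have -> : D / (1 - tau) * tau ^ k = D * tau ^ k * 1 / (1 - tau) by field_lra.
  move=> tk tn; apply: (Rle_trans _ _ _ partial); rewrite /Rdiv.
  apply: Rmult_le_compat_r; first by apply: Rlt_le; apply: Rinv_0_lt_compat; lra.
  by apply: Rmult_le_compat_l; [apply: Rmult_le_pos | lra].
elim: n => [|n IH].
  by rewrite addn0 vnorm_sub_diag /= Rminus_diag Rmult_0_r /Rdiv Rmult_0_l; lra.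
rewrite addnS.
have := vnorm_sub_triangle (x (S (k + n))) (x (k + n)%nat) (x k).
have := steps (k + n)%nat.
have -> : D * tau ^ k * (1 - tau ^ S n) / (1 - tau)
          = D * tau ^ k * (1 - tau ^ n) / (1 - tau) + D * tau ^ (k + n)%nat.
  by rewrite pow_add /=; field_lra.
lra.
Qed.

Lemma vconv_of_geometric_steps :
  exists a, vconv x a /\ forall k, vnorm (vsub (x k) a) <= D / (1 - tau) * tau ^ k.
Proof.
set B := D / (1 - tau).
have B0 : 0 <= B by apply: Rle_mult_inv_pos; lra.
have from_start N n : (N <= n)%coq_nat -> vnorm (vsub (x n) (x N)) <= B * tau ^ N.
  by move=> /leP Nn; rewrite -(subnKC Nn); apply: geometric_steps_tail.
have [a xa] : exists a, vconv x a.
  apply: vcauchy_cv => e e0.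
  have [N HN] := pow_lt_1_zero tau ltac:(rewrite Rabs_right; lra) (e / (2 * (B + 1)))
    ltac:(apply: Rdiv_lt_0_compat; lra).
  exists N => n k Nn Nk.
  have := HN N (le_n N); rewrite Rabs_right; last by apply: Rle_ge; apply: pow_le; lra.
  have := vnorm_sub_triangle (x n) (x N) (x k); rewrite (vnorm_sub_sym (x N) (x k)).
  have := from_start N n Nn; have := from_start N k Nk; have := pow_le tau N ltac:(lra).
  have : (B + 1) * (e / (2 * (B + 1))) = e / 2 by field_lra.
  move=> *; nra.
exists a; split => // k; rewrite vnorm_sub_sym.
apply: (Un_cv_le _ _ _ k (vconv_dist (x k) xa)) => n; exact: from_start.
Qed.

End GeometricSteps.

Section AcceleratedProximalGradient.
Context {m : nat}.
Variables (U : vec m -> Prop) (xi1 : vec m -> R) (g1 : vec m -> vec m) (xi2 : vec m -> ER)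
  (L mu : R) (u ut : nat -> vec m) (Ls omega : nat -> R).
Hypothesis U_closed : vclosed_set U.
Hypothesis U_convex : vconvex_set U.
Hypothesis xi1_convex : convex_fun xi1.
Hypothesis xi1_grad : is_gradient xi1 g1.
Hypothesis L_gt0 : 0 < L.
Hypothesis xi2_closed : closed_fun xi2.
Hypothesis xi2_convex : convex_efun xi2.
Hypothesis mu_gt0 : 0 < mu.
Hypothesis xi2_strongly_convex : strongly_convex xi2 mu.
Hypothesis u0_feasible : U (u 0%nat).
Hypothesis u0_dom : dom xi2 (u 0%nat).
Hypothesis Ls_range : forall k, 0 < Ls k <= L.
Hypothesis omega_range : forall k, 0 <= omega k <= sqrt (Ls k / Ls (S k)).
Hypothesis iteration : forall k : nat,
  let yhat := vadd (u k) (vscale (omega k) (vsub (u k) (u (k - 1)%nat))) in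
  is_min_over U (model xi1 g1 xi2 yhat (Ls (S k))) (ut (S k)) /\
  (ERlt (xi_sum xi1 xi2 (u k)) (xi_sum xi1 xi2 (ut (S k))) ->
     is_min_over U (model xi1 g1 xi2 (u k) (Ls (S k))) (u (S k)) /\
     descent xi1 g1 (u k) (u (S k)) (Ls (S k))) /\
  (~ ERlt (xi_sum xi1 xi2 (u k)) (xi_sum xi1 xi2 (ut (S k))) ->
     u (S k) = ut (S k) /\ descent xi1 g1 yhat (u (S k)) (Ls (S k))).

Definition extrapolation k := vadd (u k) (vscale (omega k) (vsub (u k) (u (k - 1)%nat))).
(* (0 - 1)%nat = 0 encodes u^{-1} = u^0, so step_len 0 = 0. *)
Definition step_len k := vnorm (vsub (u k) (u (k - 1)%nat)).
Local Notation F := (objective xi1 xi2).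
Definition lyapunov k := F (u k) + Ls k / 2 * step_len k ^ 2.

Local Notation step_ineq := (prox_grad_step_ineq U xi1 g1 xi2 mu U_convex xi1_convex xi1_grad
  xi2_closed xi2_convex mu_gt0 xi2_strongly_convex).
Local Notation step_gap := (prox_grad_step_gap U xi1 g1 xi2 mu U_convex xi1_convex xi1_grad
  xi2_closed xi2_convex mu_gt0 xi2_strongly_convex).

Lemma step_center k : exists y,
  is_min_over U (model xi1 g1 xi2 y (Ls (S k))) (u (S k)) /\
  descent xi1 g1 y (u (S k)) (Ls (S k)) /\ (y = u k \/ y = extrapolation k).
Proof.
have [ut_min [restart accept]] := iteration k.
case: (classic (ERlt (xi_sum xi1 xi2 (u k)) (xi_sum xi1 xi2 (ut (S k))))) => [/restart | /accept].
  by move=> [umin desc]; exists (u k); split; [|split; [|left]].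
by move=> [-> desc]; exists (extrapolation k); split; [|split; [|right]].
Qed.

Lemma iterates_feasible k : U (u k) /\ dom xi2 (u k).
Proof.
elim: k => [|k [Uk dk]]; first by split.
have [y [ymin [desc _]]] := step_center k.
split; first by case: ymin.
by have [] := step_ineq (proj1 (Ls_range (S k))) ymin desc Uk dk.
Qed.

(* The bound on omega is exactly what makes the extrapolation cost no more
   than the previous step. *)
Lemma center_dist {k y} : y = u k \/ y = extrapolation k ->
  Ls (S k) * vnorm (vsub (u k) y) ^ 2 <= Ls k * step_len k ^ 2.
Proof.
have [Lk0 _] := Ls_range k; have [LSk0 _] := Ls_range (S k); have [om0 om] := omega_range k.
have d0 := pow2_ge_0 (step_len k).
case=> ->; first by rewrite vnorm_sub_diag; nra.
have -> : vsub (u k) (extrapolation k) = vscale (- omega k) (vsub (u k) (u (k - 1)%nat)).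
  by apply: functional_extensionality => i; rewrite /extrapolation /vsub /vadd /vscale; ring.
rewrite vnorm_scale Rabs_Ropp Rabs_right -/(step_len k); last lra.
have ratio0 : 0 <= Ls k / Ls (S k) by apply: Rle_mult_inv_pos; lra.
have : omega k ^ 2 <= Ls k / Ls (S k).
  by have := sqrt_pos (Ls k / Ls (S k)); have := sqrt_sqrt _ ratio0; nra.
move=> /(Rmult_le_compat_l (Ls (S k)) _ _ (Rlt_le _ _ LSk0)).
have -> : Ls (S k) * (Ls k / Ls (S k)) = Ls k by field_lra.
have -> : Ls (S k) * (omega k * step_len k) ^ 2 = Ls (S k) * omega k ^ 2 * step_len k ^ 2 by ring.
by move=> le; apply: Rmult_le_compat_r.
Qed.

Lemma step_len_succ k : step_len (S k) = vnorm (vsub (u (S k)) (u k)).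
Proof. by rewrite /step_len subn1. Qed.

Lemma lyapunov_decrease k : lyapunov (S k) + mu / 2 * step_len (S k) ^ 2 <= lyapunov k.
Proof.
have [y [ymin [desc center]]] := step_center k; have [Uk dk] := iterates_feasible k.
have [_ step] := step_ineq (proj1 (Ls_range (S k))) ymin desc Uk dk.
have := center_dist center.
by rewrite /lyapunov step_len_succ (vnorm_sub_sym (u (S k)) (u k)); lra.
Qed.

Lemma objective_gap k {z} : U z -> dom xi2 z ->
  F (u (S k)) - F z <= L * (1 + L / mu) * (step_len (S k) ^ 2 + step_len k ^ 2).
Proof.
move=> Uz dz; have [y [ymin [desc center]]] := step_center k.
have [LSk0 LSk] := Ls_range (S k); have [Lk0 Lk] := Ls_range k.
have step := step_gap LSk0 ymin desc Uz dz.
have tri := vnorm_add_sqr_le (vsub (u (S k)) (u k)) (vsub (u k) y) Rlt_0_1.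
rewrite -vsub_via -step_len_succ Rinv_1 in tri.
have cV := center_dist center.
set P := vnorm (vsub (u (S k)) y) ^ 2 in step tri *.
have P0 : 0 <= P := pow2_ge_0 _.
have LP : Ls (S k) * P <= 2 * L * (step_len (S k) ^ 2 + step_len k ^ 2).
  have := Rmult_le_compat_l _ _ _ (Rlt_le _ _ LSk0) tri.
  have := Rmult_le_compat_r _ _ _ (pow2_ge_0 (step_len (S k))) LSk.
  have := Rmult_le_compat_r _ _ _ (pow2_ge_0 (step_len k)) Lk.
  lra.
have ratio : 1 + Ls (S k) / mu <= 1 + L / mu.
  by apply: Rplus_le_compat_l; apply: Rmult_le_compat_r; [apply: Rlt_le; apply: Rinv_0_lt_compat |].
have ratio0 : 0 <= Ls (S k) / mu by apply: Rle_mult_inv_pos; lra.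
have -> : L * (1 + L / mu) * (step_len (S k) ^ 2 + step_len k ^ 2)
          = (1 + L / mu) / 2 * (2 * L * (step_len (S k) ^ 2 + step_len k ^ 2)) by field_lra.
have E : Ls (S k) / 2 * (1 + Ls (S k) / mu) * P = (1 + Ls (S k) / mu) / 2 * (Ls (S k) * P).
  by field_lra.
rewrite E in step.
have := Rmult_le_pos _ _ (Rlt_le _ _ LSk0) P0.
nra.
Qed.

Lemma objective_bounded_below : exists b, forall z, U z -> dom xi2 z -> b <= F z.
Proof.
exists (F (u 1%nat) - L * (1 + L / mu) * (step_len 1 ^ 2 + step_len 0 ^ 2)) => z Uz dz.
by have := objective_gap 0 Uz dz; lra.
Qed.

Section Gap.
Variable Finf : R.
Hypothesis Finf_lb : forall z, U z -> dom xi2 z -> Finf <= F z.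
Hypothesis Finf_approx : forall e, 0 < e -> exists z, U z /\ dom xi2 z /\ F z < Finf + e.

Definition gap k := lyapunov k - Finf.

Lemma gap_ge0 k : 0 <= gap k.
Proof.
have [Uk dk] := iterates_feasible k; have := Finf_lb _ Uk dk.
have := pow2_ge_0 (step_len k); have [Lk0 _] := Ls_range k.
by rewrite /gap /lyapunov => *; nra.
Qed.

Let K := L * (1 + L / mu) + L.

Let K_ge0 : 0 <= K.
Proof. have : 0 <= L / mu by apply: Rle_mult_inv_pos; lra. by rewrite /K; nra. Qed.

Lemma gap_succ_le k : gap (S k) <= K * (step_len (S k) ^ 2 + step_len k ^ 2).
Proof.
apply: (Rle_of_le_add_small 1) => t t01.
have [z [Uz [dz Fz]]] := Finf_approx _ (proj1 t01).
have := objective_gap k Uz dz; have [_ LSk] := Ls_range (S k).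
have := pow2_ge_0 (step_len (S k)); have := pow2_ge_0 (step_len k).
by rewrite /gap /lyapunov /K => *; nra.
Qed.

(* Two decrease steps pay for the bound of gap_succ_le. *)
Lemma gap_two_step_contraction k : (1 + 2 * K / mu) * gap (S (S k)) <= 2 * K / mu * gap k.
Proof.
have := lyapunov_decrease (S k); have := lyapunov_decrease k; have le := gap_succ_le (S k).
set D := step_len (S (S k)) ^ 2 + step_len (S k) ^ 2 in le => dec dec'.
have drop : mu / 2 * D <= gap k - gap (S (S k)) by rewrite /gap /D; lra.
suff : gap (S (S k)) <= 2 * K / mu * (gap k - gap (S (S k))) by lra.
apply: (Rle_trans _ _ _ le).
have -> : 2 * K / mu * (gap k - gap (S (S k))) = K * ((gap k - gap (S (S k))) / (mu / 2)) by field_lra.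
apply: Rmult_le_compat_l => //; apply: (Rmult_le_reg_r (mu / 2)); first lra.
have -> : (gap k - gap (S (S k))) / (mu / 2) * (mu / 2) = gap k - gap (S (S k)) by field_lra.
lra.
Qed.

Lemma gap_geometric : exists M tau, 0 <= M /\ 0 < tau < 1 /\ forall k, gap k <= M * (tau ^ k) ^ 2.
Proof.
set c := 2 * K / mu; have c0 : 0 <= c by apply: Rle_mult_inv_pos; lra.
apply: (geometric_of_two_step_contraction _ (c / (1 + c))).
- split; first by apply: Rle_mult_inv_pos; lra.
  by apply: (Rmult_lt_reg_r (1 + c)); [lra | rewrite /Rdiv Rmult_assoc Rinv_l; lra].
- exact: gap_ge0.
- by move=> k; have := lyapunov_decrease k; have := pow2_ge_0 (step_len (S k)); rewrite /gap; nra.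
- move=> k; apply: (Rmult_le_reg_l (1 + c)); first lra.
  have -> : (1 + c) * (c / (1 + c) * gap k) = c * gap k by field_lra.
  exact: gap_two_step_contraction.
Qed.

Lemma limit_is_minimizer ustar : vconv u ustar -> Un_cv (fun k => F (u k)) Finf ->
  is_min_over U (xi_sum xi1 xi2) ustar /\ dom xi2 ustar.
Proof.
move=> u_cv F_cv.
have [dstar ev_le] := closed_fun_ev xi2_closed (rs := fun n => F (u n) - xi1 (u n))
  (fun n => proj2 (iterates_feasible n)) (fun n => ltac:(rewrite /objective; lra)) u_cv
  (CV_minus _ _ _ _ F_cv (gradient_continuous xi1_grad u_cv)).
split => //; split; first exact: (U_closed u ustar (fun n => proj1 (iterates_feasible n)) u_cv).
move=> z Uz; rewrite (xi_sum_objective xi1 xi2 dstar) /xi_sum.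
case ez: (xi2 z) => [rz|] //=.
have dz : dom xi2 z by rewrite /dom ez.
have evz : ev xi2 z = rz by rewrite /ev ez.
by have := Finf_lb _ Uz dz; rewrite /objective evz; lra.
Qed.

Section GeometricGap.
Context {M tau : R}.
Hypothesis M_ge0 : 0 <= M.
Hypothesis tau01 : 0 < tau < 1.
Hypothesis gap_le : forall k, gap k <= M * (tau ^ k) ^ 2.

Lemma steps_geometric k : vnorm (vsub (u (S k)) (u k)) <= sqrt (2 * M / mu) * tau ^ k.
Proof.
set D := sqrt (2 * M / mu); have D0 : 0 <= D := sqrt_pos _.
have := lyapunov_decrease k; have := gap_ge0 (S k); have := gap_le k.
rewrite /gap -step_len_succ => le1 ge0 dec.
have sq : step_len (S k) ^ 2 <= (D * tau ^ k) ^ 2.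
  have sD : D ^ 2 = 2 * M / mu by rewrite /D /= Rmult_1_r sqrt_sqrt //; apply: Rle_mult_inv_pos; lra.
  rewrite Rpow_mult_distr sD; apply: (Rmult_le_reg_l (mu / 2)); first lra.
  have -> : mu / 2 * (2 * M / mu * (tau ^ k) ^ 2) = M * (tau ^ k) ^ 2 by field_lra.
  lra.
have := Rmult_le_pos _ _ D0 (pow_le tau k (Rlt_le _ _ (proj1 tau01))).
have : 0 <= step_len (S k) := vnorm_ge0 _.
nra.
Qed.

Lemma objective_cv_inf : Un_cv (fun k => F (u k)) Finf.
Proof.
move=> e e0.
have tau2 : Rabs (tau ^ 2) < 1 by rewrite Rabs_right; nra.
have [N HN] := pow_lt_1_zero _ tau2 (e / (M + 1)) ltac:(apply: Rdiv_lt_0_compat; lra).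
exists N => n /HN; rewrite Rabs_right -pow_mult Nat.mul_comm pow_mult; last first.
  by apply: Rle_ge; apply: pow2_ge_0.
move=> small; have := gap_le n; have := gap_ge0 n; have [Un dn] := iterates_feasible n.
have := Finf_lb _ Un dn; have := pow2_ge_0 (step_len n); have [Ln0 _] := Ls_range n.
have := pow2_ge_0 (tau ^ n).
have : (M + 1) * (e / (M + 1)) = e by field_lra.
rewrite /gap /lyapunov /R_dist => *; apply: Rabs_def1; nra.
Qed.

End GeometricGap.

Lemma iterates_R_linear : exists ustar,
  (is_min_over U (xi_sum xi1 xi2) ustar /\ dom xi2 ustar) /\
  exists C tau, 0 < C /\ 0 < tau < 1 /\ forall k, vnorm (vsub (u k) ustar) <= C * tau ^ k.
Proof.
have [M [tau [M0 [tau01 gap_le]]]] := gap_geometric.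
set D := sqrt (2 * M / mu); have D0 : 0 <= D := sqrt_pos _.
have [ustar [u_cv rate]] :=
  vconv_of_geometric_steps u D tau D0 tau01 (steps_geometric M0 tau01 gap_le).
exists ustar; split; first exact: limit_is_minimizer u_cv (objective_cv_inf M0 tau01 gap_le).
have B0 : 0 <= D / (1 - tau) by apply: Rle_mult_inv_pos; lra.
exists (D / (1 - tau) + 1), tau; split; first lra; split => // k.
by have := rate k; have := pow_le tau k (Rlt_le _ _ (proj1 tau01)); nra.
Qed.

End Gap.

Lemma accelerated_prox_grad_R_linear : exists ustar,
  is_min_over U (xi_sum xi1 xi2) ustar /\
  (forall v, is_min_over U (xi_sum xi1 xi2) v -> v = ustar) /\
  exists C tau, 0 < C /\ 0 < tau < 1 /\ forall k, vnorm (vsub (u k) ustar) <= C * tau ^ k.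
Proof.
have [b lb] := objective_bounded_below.
have [Finf [Finf_lb Finf_approx]] : exists Finf,
    (forall z, U z -> dom xi2 z -> Finf <= F z) /\
    (forall e, 0 < e -> exists z, U z /\ dom xi2 z /\ F z < Finf + e).
  have [I [Ilb Iapprox]] := exists_inf (fun r => exists z, (U z /\ dom xi2 z) /\ r = F z) b
    (ex_intro _ _ (ex_intro _ (u 0%nat) (conj (conj u0_feasible u0_dom) erefl)))
    ltac:(by move=> r [z [[Uz dz] ->]]; apply: lb).
  exists I; split => [z Uz dz | e e0]; first by apply: Ilb; exists z.
  by have [_ [[z [[Uz dz] ->]] lt]] := Iapprox e e0; exists z.
have [ustar [[umin dstar] rate]] := iterates_R_linear Finf Finf_lb Finf_approx.
exists ustar; split => //; split => // v vmin.
exact: (min_over_unique U xi1 xi2 mu U_convex xi1_convex xi2_closed xi2_convex mu_gt0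
  xi2_strongly_convex umin vmin dstar).
Qed.

End AcceleratedProximalGradient.

Theorem theorem1 (m : nat) (U : vec m -> Prop)
  (xi1 : vec m -> R) (g1 : vec m -> vec m) (xi2 : vec m -> ER) (L mu : R)
  (u ut : nat -> vec m) (Ls omega : nat -> R) :
  vnonempty U -> vclosed_set U -> vconvex_set U ->
  convex_fun xi1 -> is_gradient xi1 g1 -> 0 < L -> lipschitz g1 L ->
  proper_fun xi2 -> closed_fun xi2 -> convex_efun xi2 ->
  0 < mu -> strongly_convex xi2 mu ->
  U (u 0%nat) -> dom xi2 (u 0%nat) ->
  (forall k, 0 < Ls k <= L) ->
  (forall k, 0 <= omega k <= sqrt (Ls k / Ls (S k))) ->
  (* step k+1: u^{k-1} is read as u (k-1) with u^{-1} = u^0 *)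
  (forall k : nat,
     let yhat := vadd (u k) (vscale (omega k) (vsub (u k) (u (k - 1)%nat))) in
     is_min_over U (model xi1 g1 xi2 yhat (Ls (S k))) (ut (S k)) /\
     (ERlt (xi_sum xi1 xi2 (u k)) (xi_sum xi1 xi2 (ut (S k))) ->
        is_min_over U (model xi1 g1 xi2 (u k) (Ls (S k))) (u (S k)) /\
        descent xi1 g1 (u k) (u (S k)) (Ls (S k))) /\
     (~ ERlt (xi_sum xi1 xi2 (u k)) (xi_sum xi1 xi2 (ut (S k))) ->
        u (S k) = ut (S k) /\
        descent xi1 g1 yhat (u (S k)) (Ls (S k)))) ->
  exists ustar : vec m,
    is_min_over U (xi_sum xi1 xi2) ustar /\
    (forall v, is_min_over U (xi_sum xi1 xi2) v -> v = ustar) /\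
    exists C tau : R, 0 < C /\ 0 < tau < 1 /\
      forall k : nat, vnorm (vsub (u k) ustar) <= C * tau ^ k.
Proof.
move=> _ U_closed U_convex xi1_convex xi1_grad L_gt0 _ _ xi2_closed xi2_convex mu_gt0 xi2_sc
  u0_feasible u0_dom Ls_range omega_range iteration.
exact: (accelerated_prox_grad_R_linear U xi1 g1 xi2 L mu u ut Ls omega U_closed U_convex
  xi1_convex xi1_grad L_gt0 xi2_closed xi2_convex mu_gt0 xi2_sc u0_feasible u0_dom Ls_range
  omega_range iteration).
Qed.
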